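(* Let $G$ be a connected graph and let $e_i$ be an edge of $G$ with end points $p_i,q_i$. For any $s,t\in V(G)$, $$t(G)\,t(\overline{G}_{i,st})=t(G_{st})\,t(\overline{G}_i)-\frac14\big[t(G_{p_is})-t(G_{q_is})-t(G_{p_it})+t(G_{q_it})\big]^2.$$
   Context: Graphs are finite and may have multiple edges and loops; $t(H)$ is the number of spanning trees of $H$; a one-vertex graph has $t=1$. For vertices $x,y$ of $H$, $H_{xy}$ is obtained by identifying $x$ and $y$, with the convention $t(H_{xx}):=0$. $\overline{G}_i$ is the graph obtained by contracting $e_i$, which for counting spanning trees is $G_{p_iq_i}$, and $\overline{G}_{i,st}$ is obtained from $\overline{G}_i$ by identifying $s$ and $t$ (i.e. $G_{p_iq_i,st}$). *)

From mathcomp Require Import all_boot all_order all_algebra.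
Set Implicit Arguments. Unset Strict Implicit. Unset Printing Implicit Defensive.

(* A finite multigraph (loops and multiple edges allowed) is given by a vertex
   set S : {set V} inside an ambient finType V, an edge type E (a finType) and
   an endpoint map en : E -> V * V. *)
Section Graphs.
Variables (V E : finType).

Definition mgraph := ({set V} * (E -> V * V))%type.

Definition adj (en : E -> V * V) (F : {set E}) : rel V :=
  fun u v => [exists e in F, (en e == (u, v)) || (en e == (v, u))].

Definition connected_on (S : {set V}) (en : E -> V * V) (F : {set E}) : bool :=
  [forall u in S, forall v in S, connect (adj en F) u v].

(* F is (the edge set of) a spanning tree of (S, en): (S, F) is connected and
   minimally so, i.e. no edge of F lies on a cycle (every edge of F is a bridge;
   in particular loops and duplicated parallel edges are excluded). *)
Definition spanning_tree (S : {set V}) (en : E -> V * V) (F : {set E}) : bool :=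
  connected_on S en F &&
  [forall e in F, ~~ connect (adj en (F :\ e)) (en e).1 (en e).2].

Definition ntrees (H : mgraph) : nat :=
  #|[set F : {set E} | spanning_tree H.1 H.2 F]|.

Definition connected_graph (H : mgraph) : bool := connected_on H.1 H.2 setT.

Definition idv (x y : V) (v : V) : V := if v == y then x else v.

(* H_{xy}: identify x and y (y is merged into x); meaningful for x != y *)
Definition ident (H : mgraph) (x y : V) : mgraph :=
  (H.1 :\ y, fun e => (idv x y (H.2 e).1, idv x y (H.2 e).2)).

(* t(H_{xy}) with the convention t(H_{xx}) = 0 *)
Definition tid (H : mgraph) (x y : V) : nat :=
  if x == y then 0 else ntrees (ident H x y).

(* t(H_{pq,st}): identify p and q, then identify (the images of) s and t;
   by the convention t(H_{pp}) = 0 this is 0 when p = q. *)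
Definition tid2 (H : mgraph) (p q s t : V) : nat :=
  if p == q then 0 else tid (ident H p q) (idv p q s) (idv p q t).

End Graphs.

From mathcomp Require Import all_boot all_order all_algebra.
From mathcomp Require Import ring.
Set Implicit Arguments. Unset Strict Implicit. Unset Printing Implicit Defensive.
Import GRing.Theory Num.Theory.

(* Let L be the Laplacian of G and M the matrix L with the row and column of a
   fixed vertex r deleted.  Identifying a and b amounts to contracting a new
   edge ab, so by deletion-contraction and the matrix-tree theorem
   det (M + b b^T) = t(G) + t(G_ab), where b = e_a - e_b with its r-entry
   deleted.  The matrix determinant lemma turns this into t(G_ab) = t(G) R(a,b)
   with R(a,b) = b^T M^-1 b the effective resistance.  Adding the two edges st
   and pq and using the rank-two determinant lemma gives in the same way
   t(G_{pq,st}) = t(G) (R(p,q) R(s,t) - B^2) with B = b_pq^T M^-1 b_st, and by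
   polarization 2B = R(p,t) + R(q,s) - R(p,s) - R(q,t). *)

Lemma connect_preorder_sub (T : finType) (e R : rel T) :
  reflexive R -> transitive R -> subrel e R -> subrel (connect e) R.
Proof.
move=> Rr Rt eR x _ /connectP[p xp ->].
elim: p x xp => [|z p IHp] x /=; first by move=> _; apply: Rr.
by case/andP=> /eR xz /IHp; apply: Rt.
Qed.

Lemma subsetU1_notin (T : finType) (A B : {set T}) a :
  a \notin A -> (A \subset a |: B) = (A \subset B).
Proof.
move=> aA; rewrite -subDset; suff -> : A :\ a = A by [].
by apply/setDidPl; rewrite disjoint_sym disjoints1.
Qed.

Section Connectivity.
Variables (V E : finType).
Implicit Types (en : E -> V * V) (A F : {set E}) (S : {set V}) (e f : E) (x y u v : V).

Lemma adjP en A u v :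
  reflect (exists2 f, f \in A & en f = (u, v) \/ en f = (v, u)) (adj en A u v).
Proof.
apply: (iffP exists_inP) => [[f fA /orP[]/eqP ef]|[f fA [] ef]]; exists f => //;
  by [left | right | rewrite ef eqxx ?orbT].
Qed.

Lemma adjC en A : symmetric (adj en A).
Proof.
by move=> u v; apply/adjP/adjP => -[f fA /or_comm ef]; exists f.
Qed.

Lemma adj_edge en A f : f \in A -> adj en A (en f).1 (en f).2.
Proof. by move=> fA; apply/adjP; exists f => //; left; case: (en f). Qed.

Lemma connect_adjC en A : connect_sym (adj en A).
Proof. exact/sym_connect_sym/adjC. Qed.

Lemma connect_adjS en A F : A \subset F -> subrel (connect (adj en A)) (connect (adj en F)).
Proof.
move=> sAF; apply: connect_sub => u v /adjP[f fA ef].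
by apply/connect1/adjP; exists f => //; apply: (subsetP sAF).
Qed.

Lemma connect_adj0 en u v : connect (adj en set0) u v -> u = v.
Proof. by case/connectP=> -[_ ->|w p /= /andP[/adjP[f]]] //; rewrite inE. Qed.

Lemma idv_id x y v : v != y -> idv x y v = v.
Proof. by rewrite /idv => /negbTE ->. Qed.

Lemma idv_l x y : idv x y x = x.
Proof. by rewrite /idv; case: eqP. Qed.

Lemma idv_r x y : idv x y y = x.
Proof. by rewrite /idv eqxx. Qed.

Lemma idv_setD1 S x y v : x != y -> x \in S -> v \in S -> idv x y v \in S :\ y.
Proof.
move=> xy xS vS; rewrite /idv; case: eqP => [_|/eqP vy]; by rewrite !inE ?xy ?vy.
Qed.

Definition contract en x y : E -> V * V :=
  fun f => (idv x y (en f).1, idv x y (en f).2).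

Lemma connect_idv en A e x y v : en e = (x, y) -> e \in A ->
  connect (adj en A) v (idv x y v).
Proof.
move=> exy eA; rewrite /idv; case: eqP => [->|_]; last exact: connect0.
by apply/connect1/adjP; exists e => //; right.
Qed.

Lemma connect_contract en A e x y u v : en e = (x, y) -> e \in A ->
  connect (adj en A) u v =
  connect (adj (contract en x y) (A :\ e)) (idv x y u) (idv x y v).
Proof.
move=> exy eA; have to_idv := connect_idv _ exy eA.
have of_idv w : connect (adj en A) (idv x y w) w by rewrite connect_adjC.
apply/idP/idP.
  apply: (connect_preorder_sub
    (R := fun u v => connect (adj (contract en x y) (A :\ e)) (idv x y u) (idv x y v))).
  - by move=> w; apply: connect0.
  - by move=> w1 w2 w3 /connect_trans; apply.
  move=> a b /adjP[f fA ef]; have [fe|fe] := eqVneq f e.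
    by move: ef; rewrite fe exy => -[] [<- <-]; rewrite idv_l idv_r connect0.
  apply/connect1/adjP; exists f; first by rewrite !inE fe.
  by rewrite /contract; case: ef => ->; [left | right].
move=> c; apply: connect_trans (to_idv u) (connect_trans _ (of_idv v)); move: c.
apply: connect_sub => a b /adjP[f]; rewrite inE => /andP[_ fA].
have cf : connect (adj en A) (idv x y (en f).1) (idv x y (en f).2).
  exact: connect_trans (of_idv _) (connect_trans (connect1 (adj_edge en fA)) (to_idv _)).
by rewrite /contract => -[] [<- <-]; rewrite // connect_adjC.
Qed.

Lemma connect_cycle_edge en A e x y : en e = (x, y) -> x != y -> connect (adj en A) x y ->
  exists2 f, f \in A & connect (adj en (e |: (A :\ f))) (en f).1 (en f).2.
Proof.
(* The first edge f of a shortest path from x to y is not used again, since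
   the rest of the path avoids x. *)
move=> exy xy /connectP[p0 /shortenP[p xp ux _] ylast].
case: p xp ux ylast => [_ _ yx|z p /= /andP[/adjP[f fA fxz] zp]].
  by rewrite yx eqxx in xy.
rewrite inE negb_or => /andP[/andP[xz xNp] _] ylast; exists f => //.
have xf : x \in [:: (en f).1; (en f).2] by case: fxz => ->; rewrite !inE eqxx ?orbT.
have zy : connect (adj en (A :\ f)) z y.
  apply/connectP; exists p => //; apply: (sub_in_path (P := predC1 x)) zp; last first.
    apply/allP => w; rewrite /= inE => /orP[/eqP->|wp]; first by rewrite eq_sym.
    by apply: contraNneq xNp => <-.
  move=> u v; rewrite !inE /= => ux vx /adjP[g gA guv]; apply/adjP; exists g => //.
  rewrite !inE gA andbT.
  apply: contraTneq xf => <-.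
  by case: guv => -> /=; rewrite !inE negb_or ![x == _]eq_sym ux vx.
have zx : connect (adj en (e |: (A :\ f))) z x.
  apply: connect_trans (connect_adjS (subsetU1 _ _) zy) _.
  by apply/connect1/adjP; exists e; rewrite ?setU11 //; right.
by case: fxz => ->; rewrite // connect_adjC.
Qed.

End Connectivity.

Section SpanningTrees.
Variables (V E : finType).
Implicit Types (en : E -> V * V) (F : {set E}) (S : {set V}) (e f : E) (x y : V).

Lemma bridge_contract en F e f x y : en e = (x, y) -> e \in F -> f != e ->
  connect (adj en (F :\ f)) (en f).1 (en f).2 =
  connect (adj (contract en x y) (F :\ e :\ f)) (contract en x y f).1 (contract en x y f).2.
Proof.
move=> exy eF fe; rewrite (connect_contract _ _ exy); last by rewrite !inE eq_sym fe.
by rewrite !setDDl setUC.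
Qed.

Lemma connected_on_contract S en F e x y : en e = (x, y) -> e \in F -> x != y -> x \in S ->
  connected_on S en F = connected_on (S :\ y) (contract en x y) (F :\ e).
Proof.
move=> exy eF xy xS; apply/forall_inP/forall_inP => conn u uS; apply/forall_inP => v vS.
  move: uS vS; rewrite !inE => /andP[uy uS] /andP[vy vS].
  rewrite -(idv_id x uy) -(idv_id x vy) -(connect_contract _ _ exy) //.
  exact: (forall_inP (conn u uS)).
rewrite (connect_contract _ _ exy eF).
exact: (forall_inP (conn _ (idv_setD1 xy xS uS))) _ (idv_setD1 xy xS vS).
Qed.

Lemma spanning_tree_contract S en F e x y : en e = (x, y) -> e \in F -> x != y -> x \in S ->
  spanning_tree S en F = spanning_tree (S :\ y) (contract en x y) (F :\ e).
Proof.
move=> exy eF xy xS; rewrite /spanning_tree (connected_on_contract exy) //.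
congr (_ && _); apply/forall_inP/forall_inP => bridges f.
  by rewrite !inE => /andP[fe fF]; rewrite -(bridge_contract exy) //; apply: bridges.
move=> fF; have [{f fF}->|fe] := eqVneq f e; last first.
  by rewrite (bridge_contract exy) //; apply: bridges; rewrite !inE fe.
rewrite exy /=; apply/negP => /(connect_cycle_edge exy xy)[g gFe].
have eFeg : (e |: (F :\ e :\ g)) :\ e = F :\ e :\ g by rewrite setU1K // !inE eqxx andbF.
rewrite (connect_contract _ _ exy) ?setU11 // eFeg; apply/negP.
exact: bridges.
Qed.

End SpanningTrees.

Section TreeCounting.
Variables (V E : finType).
Implicit Types (en : E -> V * V) (D F T : {set E}) (S : {set V}) (e f : E) (x y r : V).

Definition ntrees_within S en D :=
  #|[set F : {set E} | (F \subset D) && spanning_tree S en F]|.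

Lemma ntrees_within_setT S en : ntrees (S, en) = ntrees_within S en setT.
Proof. by apply: eq_card => F; rewrite !inE subsetT. Qed.

Lemma spanning_tree_loopfree S en F f : spanning_tree S en F -> f \in F -> (en f).1 != (en f).2.
Proof. by case/andP=> _ /forall_inP bridges /bridges; apply: contraNneq => ->. Qed.

Lemma spanning_tree0 S en r : r \in S -> spanning_tree S en set0 = (S :\ r == set0).
Proof.
move=> rS; rewrite /spanning_tree /connected_on.
have -> : [forall e in set0, ~~ connect (adj en (set0 :\ e)) (en e).1 (en e).2].
  by apply/forall_inP => e; rewrite inE.
rewrite andbT; apply/forall_inP/eqP => [conn|Sr u uS]; first last.
  have Sr_r w : w \in S -> w = r.
    by move=> wS; apply/eqP; move/setP/(_ w): Sr; rewrite !inE wS andbT => /negbFE.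
  by apply/forall_inP => v vS; rewrite (Sr_r u uS) (Sr_r v vS) connect0.
apply/setP => u; rewrite !inE; apply/negP => /andP[/eqP ur uS].
exact/ur/(connect_adj0 (forall_inP (conn u uS) r rS)).
Qed.

Lemma ntrees_within0 S en r : r \in S -> ntrees_within S en set0 = (S :\ r == set0).
Proof.
move=> rS; have [Sr|Sr] := eqVneq (S :\ r) set0.
  rewrite /= -(cards1 (set0 : {set E})); apply: eq_card => F.
  by rewrite !inE subset0 andb_idr // => /eqP->; rewrite (spanning_tree0 en rS) Sr eqxx.
rewrite /= -(cards0 {set E}); apply: eq_card => F.
by rewrite !inE subset0; case: eqP => // ->; rewrite /= (spanning_tree0 en rS) (negbTE Sr).
Qed.

Lemma ntrees_within_loop S en D e : (en e).1 = (en e).2 ->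
  ntrees_within S en (e |: D) = ntrees_within S en D.
Proof.
move=> loop; apply: eq_card => F; rewrite !inE.
have [tF|] := boolP (spanning_tree S en F); rewrite ?andbF ?andbT //.
by rewrite subsetU1_notin //; apply/negP => /(spanning_tree_loopfree tF); rewrite loop eqxx.
Qed.

Lemma ntrees_within_contract S en D e x y : e \notin D -> en e = (x, y) -> x != y -> x \in S ->
  ntrees_within S en (e |: D) =
  ntrees_within S en D + ntrees_within (S :\ y) (contract en x y) D.
Proof.
move=> eD exy xy xS; rewrite /ntrees_within.
set T := [set F | _ && _]; set withe := [set F : {set E} | e \in F].
rewrite -(cardsID withe T) addnC; congr (_ + _).
  apply: eq_card => F; rewrite !inE; have [eF|eF] /= := boolP (e \in F).
    by apply/esym/negbTE; apply: contra eD => /andP[/subsetP/(_ e eF)].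
  by rewrite subsetU1_notin.
have inj : {in T :&: withe &, injective (fun F => F :\ e)}.
  move=> F1 F2; rewrite !inE => /andP[_ eF1] /andP[_ eF2] same.
  by rewrite -(setD1K eF1) same setD1K.
rewrite -(card_in_imset inj); apply: eq_card => F'; rewrite inE.
apply/imsetP/idP => [[F]|/andP[sF' tF']].
  rewrite !inE => /andP[/andP[sF tF] eF] ->.
  by rewrite subDset sF -(spanning_tree_contract exy).
have eF' : e \notin F' by apply: contra eD; apply: (subsetP sF').
exists (e |: F'); last by rewrite setU1K.
by rewrite !inE eqxx setUS //= andbT (spanning_tree_contract exy) ?setU1K // setU11.
Qed.

Lemma connected_on_setD1 S en F f : connect (adj en (F :\ f)) (en f).1 (en f).2 ->
  connected_on S en F -> connected_on S en (F :\ f).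
Proof.
move=> cf /forall_inP conn; apply/forall_inP => u uS; apply/forall_inP => v vS.
move: (forall_inP (conn u uS) v vS); apply: connect_sub => a b /adjP[g gF gab].
have [gf|gf] := eqVneq g f; last by apply/connect1/adjP; exists g; rewrite // !inE gf.
by move: cf; rewrite -gf; case: gab => ->; rewrite // connect_adjC.
Qed.

Lemma spanning_tree_exists S en F : connected_on S en F ->
  exists2 T : {set E}, T \subset F & spanning_tree S en T.
Proof.
move=> cF; pose P (T : {set E}) := (T \subset F) && connected_on S en T.
have PF : P F by rewrite /P subxx.
have [T /minsetP[/andP[TF cT] minT]] := ex_minset (ex_intro _ F PF).
exists T => //; rewrite /spanning_tree cT; apply/forall_inP => f fT; apply/negP => cf.
have TfT : T :\ f = T.
  by apply: minT; rewrite ?subD1set // /P (subset_trans (subD1set T f) TF) connected_on_setD1.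
by move: fT; rewrite -TfT !inE eqxx.
Qed.

Lemma ntrees_gt0 S en : connected_graph (S, en) -> 0 < ntrees (S, en).
Proof. by case/spanning_tree_exists=> T _ tT; apply/card_gt0P; exists T; rewrite inE. Qed.

Lemma identE S en x y : ident (S, en) x y = (S :\ y, contract en x y).
Proof. by []. Qed.

Lemma tid_id (H : mgraph V E) x : tid H x x = 0.
Proof. by rewrite /tid eqxx. Qed.

Lemma tid_neq (H : mgraph V E) x y : x != y -> tid H x y = ntrees (ident H x y).
Proof. by rewrite /tid => /negbTE->. Qed.

Lemma tid2_neq (H : mgraph V E) p q s t : p != q ->
  tid2 H p q s t = tid (ident H p q) (idv p q s) (idv p q t).
Proof. by rewrite /tid2 => /negbTE->. Qed.

End TreeCounting.

Local Open Scope ring_scope.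

Section Determinants.
Variable R : comPzRingType.

Lemma det1D_mulmxC m n (A : 'M[R]_(m, n)) (B : 'M[R]_(n, m)) :
  \det (1%:M + A *m B) = \det (1%:M + B *m A).
Proof.
have lowup : block_mx 1%:M (- A) B 1%:M =
    block_mx 1%:M 0 B 1%:M *m block_mx 1%:M (- A) 0 (1%:M + B *m A).
  rewrite mulmx_block !mul1mx !mulmx1 ?mul0mx ?mulmx0 ?addr0 ?add0r.
  by rewrite mulmxN addrCA addNr addr0.
have uplow : block_mx 1%:M (- A) B 1%:M =
    block_mx (1%:M + A *m B) (- A) 0 1%:M *m block_mx 1%:M 0 B 1%:M.
  rewrite mulmx_block !mul1mx !mulmx1 ?mul0mx ?mulmx0 ?addr0 ?add0r.
  by rewrite mulNmx -addrA subrr addr0.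
move/(congr1 determinant): lowup; rewrite uplow !det_mulmx det_lblock det_ublock.
by rewrite det_ublock !det1 !mul1r !mulr1.
Qed.

Lemma det_mx22 (A : 'M[R]_2) : \det A = A 0 0 * A 1 1 - A 0 1 * A 1 0.
Proof.
rewrite (expand_det_row _ 0) !big_ord_recl big_ord0 addr0 /cofactor !det_mx11 !mxE /=.
rewrite expr0 expr1 mul1r mulN1r mulrN.
by congr (A _ _ * A _ _ - A _ _ * A _ _); apply: val_inj.
Qed.

Lemma det_block_mx11 (a b c d : 'M[R]_1) :
  \det (block_mx a b c d) = a 0 0 * d 0 0 - b 0 0 * c 0 0.
Proof.
rewrite det_mx22.
have -> : 0 = lshift 1 (0 : 'I_1) :> 'I_2 by apply: val_inj.
have -> : 1 = rshift 1 (0 : 'I_1) :> 'I_2 by apply: val_inj.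
by rewrite (block_mxEul a b c d) (block_mxEur a b c d) (block_mxEdl a b c d) (block_mxEdr a b c d).
Qed.

End Determinants.

Section BilinearForms.
Variables (R : comPzRingType) (m : nat).
Implicit Types (B : 'M[R]_m) (u v a b c d : 'cV[R]_m).

Definition bilin B u v : R := (u^T *m B *m v) 0 0.

Lemma bilinC B u v : B^T = B -> bilin B u v = bilin B v u.
Proof.
have tr11 (X : 'M[R]_1) : X 0 0 = X^T 0 0 by rewrite mxE.
by move=> sB; rewrite /bilin [LHS]tr11 !trmx_mul trmxK sB mulmxA.
Qed.

Lemma bilinBB B a b c d :
  bilin B (a - b) (c - d) = bilin B a c - bilin B a d - bilin B b c + bilin B b d.
Proof.
have trB : (a - b)^T = a^T - b^T by apply/matrixP => i j; rewrite !mxE.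
by rewrite /bilin trB !mulmxBl !mulmxBr !mxE; ring.
Qed.

Lemma bilin_polar B a b c d : B^T = B ->
  bilin B (a - b) (c - d) *+ 2 =
  bilin B (a - d) (a - d) + bilin B (b - c) (b - c)
  - bilin B (a - c) (a - c) - bilin B (b - d) (b - d).
Proof.
move=> sB; rewrite !bilinBB (bilinC d a sB) (bilinC c b sB) (bilinC c a sB) (bilinC d b sB).
ring.
Qed.

End BilinearForms.

Lemma det_add_rank2 (R : comUnitRingType) m (M : 'M[R]_m) (u v : 'cV[R]_m) (c d : R) :
  M \in unitmx ->
  \det (M + c *: (u *m u^T) + d *: (v *m v^T)) =
  \det M * ((1 + c * bilin (invmx M) u u) * (1 + d * bilin (invmx M) v v)
            - c * d * bilin (invmx M) u v * bilin (invmx M) v u).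
Proof.
move=> Mu; set W : 'M_(m, 1 + 1) := row_mx (c *: u) (d *: v).
set Vt : 'M_(1 + 1, m) := col_mx u^T v^T.
have WV : W *m Vt = c *: (u *m u^T) + d *: (v *m v^T).
  by rewrite /W /Vt mul_row_col -!scalemxAl.
have -> : M + c *: (u *m u^T) + d *: (v *m v^T) = M *m (1%:M + invmx M *m W *m Vt).
  by rewrite mulmxDr mulmx1 -mulmxA !mulmxA (mulmxV Mu) mul1mx WV addrA.
rewrite det_mulmx det1D_mulmxC; congr (_ * _).
rewrite /Vt /W mulmxA mul_col_mx mul_col_row (scalar_mx_block 1 1) add_block_mx.
rewrite /bilin det_block_mx11 -!scalemxAr !add0r !mxE /= !mulr1n.
ring.
Qed.

Lemma det_add_rank1 (R : comUnitRingType) m (M : 'M[R]_m) (u : 'cV[R]_m) (c : R) :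
  M \in unitmx -> \det (M + c *: (u *m u^T)) = \det M * (1 + c * bilin (invmx M) u u).
Proof.
move=> Mu; have := det_add_rank2 u u c 0 Mu.
by rewrite scale0r addr0 => ->; rewrite !(mul0r, mulr0, addr0, mulr1, subr0).
Qed.

Section VertexCoordinates.
Variables (R : comPzRingType) (V : finType).
Local Notation n := #|V|.
Implicit Types (A B N : 'M[R]_n) (S T U : {set V}) (x y r v : V) (c : R).

Definition vcol v : 'cV[R]_n := \col_i (enum_val i == v)%:R.
Definition edge_col x y : 'cV[R]_n := vcol x - vcol y.
Definition diag_set T : 'M[R]_n := diag_mx (\row_i (enum_val i \in T)%:R).
(* [\det (principal_mx A T)] is the principal minor of [A] on the rows and
   columns indexed by [T]. *)
Definition principal_mx A T : 'M[R]_n :=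
  \matrix_(i, j) if (enum_val i \in T) && (enum_val j \in T) then A i j else (i == j)%:R.
Definition merge_mx x y : 'M[R]_n := \matrix_(i, j) (idv x y (enum_val j) == enum_val i)%:R.
Definition shear_mx x y : 'M[R]_n := 1%:M + vcol x *m (vcol y)^T.

Lemma enum_val_eq (i : 'I_n) v : (enum_val i == v) = (i == enum_rank v).
Proof. by apply/eqP/eqP => [<-|->]; rewrite ?enum_valK ?enum_rankK. Qed.

Lemma vcol_delta v : vcol v = delta_mx (enum_rank v) 0.
Proof. by apply/matrixP => i j; rewrite !mxE enum_val_eq ord1 eqxx andbT. Qed.

Lemma vcol_mul_tr v : vcol v *m (vcol v)^T = delta_mx (enum_rank v) (enum_rank v).
Proof. by rewrite vcol_delta trmx_delta mul_delta_mx. Qed.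

Lemma tr_vcol_mul_vcol x y : (vcol x)^T *m vcol y = (x == y)%:R%:M.
Proof.
rewrite !vcol_delta trmx_delta mul_delta_mx_cond (inj_eq enum_rank_inj).
by case: (x == y); apply/matrixP => i j; rewrite !ord1 !mxE.
Qed.

Lemma edge_col_id x : edge_col x x = 0.
Proof. exact: subrr. Qed.

Lemma rank1N (u : 'cV[R]_n) : (- u) *m (- u)^T = u *m u^T.
Proof. by rewrite linearN /= mulNmx mulmxN opprK. Qed.

Lemma conj_rank1 (Q : 'M[R]_n) (u : 'cV[R]_n) : Q *m (u *m u^T) *m Q^T = (Q *m u) *m (Q *m u)^T.
Proof. by rewrite trmx_mul !mulmxA. Qed.

Lemma edge_colC_rank1 x y : edge_col y x *m (edge_col y x)^T = edge_col x y *m (edge_col x y)^T.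
Proof. by rewrite -rank1N /edge_col opprB. Qed.

Lemma tr_diag_set T : (diag_set T)^T = diag_set T.
Proof. exact: tr_diag_mx. Qed.

Lemma diag_set_vcol T v : diag_set T *m vcol v = if v \in T then vcol v else 0.
Proof.
apply/matrixP => i j; rewrite mul_diag_mx !mxE.
by case vT: (v \in T); rewrite !mxE; case: (enum_val i =P v) => [->|_]; rewrite ?vT ?mulr1 ?mulr0.
Qed.

Lemma principal_mxE A T :
  principal_mx A T = diag_set T *m A *m diag_set T + (1%:M - diag_set T).
Proof.
apply/matrixP => i j; rewrite mul_mx_diag mul_diag_mx !mxE.
case: (i =P j) => [<-|_]; last case: (enum_val j \in T);
  by case: (enum_val i \in T); rewrite /= ?mul1r ?mulr1 ?mul0r ?mulr0 ?add0r ?addr0 ?subrr ?subr0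
    ?mulr0n ?oppr0 ?addr0.
Qed.

Lemma tr_principal_mx A T : A^T = A -> (principal_mx A T)^T = principal_mx A T.
Proof.
move=> sA; apply/matrixP => i j; rewrite !mxE andbC eq_sym.
by case: ifP => // _; rewrite -[in RHS]sA mxE.
Qed.

Lemma principal_mx_rank1 A T c (u : 'cV[R]_n) :
  principal_mx (A + c *: (u *m u^T)) T =
  principal_mx A T + c *: ((diag_set T *m u) *m (diag_set T *m u)^T).
Proof.
rewrite !principal_mxE mulmxDr mulmxDl -addrA [_ + (1%:M - _)]addrC addrA.
by rewrite trmx_mul tr_diag_set -scalemxAr -scalemxAl !mulmxA.
Qed.

Lemma principal_mx_congr A U (X Y : 'M[R]_n) : diag_set U *m X = diag_set U *m Y ->
  principal_mx (X *m A *m X^T) U = principal_mx (Y *m A *m Y^T) U.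
Proof.
move=> XY; rewrite !principal_mxE; congr (_ + _).
have sandwich W : diag_set U *m (W *m A *m W^T) *m diag_set U =
    (diag_set U *m W) *m A *m (diag_set U *m W)^T.
  by rewrite trmx_mul tr_diag_set !mulmxA.
by rewrite !sandwich XY.
Qed.

Lemma merge_mx_vcol x y v : merge_mx x y *m vcol v = vcol (idv x y v).
Proof. by rewrite vcol_delta -colE; apply/matrixP => i j; rewrite !mxE enum_rankK eq_sym. Qed.

Lemma merge_mx_edge_col x y u v :
  merge_mx x y *m edge_col u v = edge_col (idv x y u) (idv x y v).
Proof. by rewrite /edge_col mulmxBr !merge_mx_vcol. Qed.

Lemma diag_set_merge_mx U x y : x \notin U -> y \notin U -> diag_set U *m merge_mx x y = diag_set U.
Proof.
move=> xU yU; apply/matrixP => i k; rewrite mul_diag_mx !mxE.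
case iU: (enum_val i \in U); rewrite ?mul1r ?mul0r ?mul0rn //=.
rewrite /idv; case: ifP => [/eqP eky|_].
  have ne1 : x != enum_val i by apply: contraNneq xU => ->.
  have ik : (i == k) = false by apply/negbTE; apply: contraNneq yU => ik; rewrite -eky -ik iU.
  by rewrite (negbTE ne1) ik.
by rewrite eq_sym enum_val_eq enum_valK.
Qed.

Lemma principal_mx_merge_out A U x y : x \notin U -> y \notin U ->
  principal_mx (merge_mx x y *m A *m (merge_mx x y)^T) U = principal_mx A U.
Proof.
move=> xU yU; rewrite (@principal_mx_congr A U (merge_mx x y) 1%:M).
  by rewrite mul1mx trmx1 mulmx1.
by rewrite diag_set_merge_mx // mulmx1.
Qed.

Lemma diag_set_shear_mx U x y : y \notin U ->
  diag_set U *m shear_mx x y = diag_set U *m merge_mx x y.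
Proof.
move=> yU; apply/matrixP => i k; rewrite !mul_diag_mx !mxE.
case iU: (enum_val i \in U); rewrite ?mul1r ?mul0r //=.
rewrite big_ord1 !mxE /idv.
have iy : enum_val i != y by apply: contraNneq yU => <-.
case: ifP => [/eqP eky|_].
  have -> : (i == k) = false by apply/negbTE; apply: contra iy => /eqP ->; rewrite eky.
  by rewrite mulr1 add0r eq_sym.
by rewrite mulr0 addr0 eq_sym enum_val_eq enum_valK.
Qed.

Lemma det_shear_mx x y : x != y -> \det (shear_mx x y) = 1.
Proof.
move=> xy; rewrite /shear_mx det1D_mulmxC tr_vcol_mul_vcol eq_sym (negbTE xy).
by rewrite raddf0 addr0 det1.
Qed.

Lemma shear_mx_edge_col x y : x != y -> shear_mx x y *m edge_col x y = - vcol y.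
Proof.
move=> xy; rewrite /shear_mx /edge_col mulmxDl mul1mx -mulmxA mulmxBr !tr_vcol_mul_vcol.
by rewrite eqxx eq_sym (negbTE xy) raddf0 sub0r mulmxN mulmx1 addrC addKr.
Qed.

Lemma shear_mx_principal_mx B T x y : x \in T -> y \in T ->
  shear_mx x y *m principal_mx B T *m (shear_mx x y)^T =
  principal_mx (shear_mx x y *m B *m (shear_mx x y)^T) T.
Proof.
move=> xT yT; set Q := shear_mx x y; set Z := diag_set T.
have trZ : Z^T = Z := tr_diag_set T.
have yZ : (vcol y)^T *m Z = (vcol y)^T by rewrite -{1}trZ -trmx_mul diag_set_vcol yT.
have QZ : Q *m Z = Z *m Q.
  by rewrite mulmxDl mulmxDr mul1mx mulmx1 -mulmxA yZ mulmxA diag_set_vcol xT.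
have Q1Z : Q *m (1%:M - Z) = 1%:M - Z.
  rewrite mulmxBr mulmx1 QZ mulmxDr mulmx1 mulmxA diag_set_vcol xT.
  by rewrite opprD addrACA subrr addr0.
have tr1Z : (1%:M - Z)^T = 1%:M - Z by rewrite linearB /= trmx1 trZ.
have ZQt : (1%:M - Z) *m Q^T = 1%:M - Z by rewrite -{1}tr1Z -trmx_mul Q1Z tr1Z.
have ZQt2 : Z *m Q^T = Q^T *m Z by rewrite -{1}trZ -trmx_mul QZ trmx_mul trZ.
rewrite !principal_mxE mulmxDr mulmxDl Q1Z ZQt !mulmxA QZ; congr (_ + _).
by rewrite -[_ *m Z *m Q^T]mulmxA ZQt2 !mulmxA.
Qed.

Lemma det_principal_mx_add_diag N T y c : y \in T ->
  \det (principal_mx N T + c *: (vcol y *m (vcol y)^T)) =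
  \det (principal_mx N T) + c * \det (principal_mx N (T :\ y)).
Proof.
move=> yT; rewrite vcol_mul_tr; set Y := enum_rank y.
have liftF k : (lift Y k == Y) = false by apply/negbTE; rewrite eq_sym neq_lift.
have cofE j : cofactor (principal_mx N T + c *: delta_mx Y Y) Y j = cofactor (principal_mx N T) Y j.
  rewrite /cofactor; congr (_ * \det _); apply/matrixP => a b; rewrite !mxE.
  by rewrite liftF /= mulr0 addr0.
rewrite (expand_det_row _ Y) (expand_det_row (principal_mx N T) Y).
under eq_bigr => j _ do rewrite cofE !mxE eqxx /= mulrDl.
rewrite big_split /=; congr (_ + _); first by apply: eq_bigr => j _; rewrite !mxE.
rewrite (bigD1 Y) //= big1 ?addr0; last by move=> j /negbTE jY; rewrite jY /= mulr0 mul0r.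
rewrite eqxx /= mulr1 (expand_det_row (principal_mx N (T :\ y)) Y) (bigD1 Y) //= big1 ?addr0.
  rewrite !mxE /Y enum_rankK !inE !eqxx /= mul1r; congr (_ * _).
  rewrite /cofactor; congr (_ * \det _); apply/matrixP => a b; rewrite !mxE !inE.
  by rewrite !enum_val_eq !liftF.
move=> j jY; rewrite !mxE /Y enum_rankK !inE eqxx /= eq_sym.
by rewrite (negbTE jY) mul0r.
Qed.


Lemma det_principal_mx_add_edge_end A S x y c : x != y -> x \in S -> y \in S ->
  \det (principal_mx (A + c *: (edge_col x y *m (edge_col x y)^T)) (S :\ x)) =
  \det (principal_mx A (S :\ x)) + c * \det (principal_mx A (S :\ x :\ y)).
Proof.
move=> xy xS yS; have yS' : y \in S :\ x by rewrite !inE eq_sym xy.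
rewrite principal_mx_rank1 /edge_col mulmxBr !diag_set_vcol yS' !inE eqxx /= sub0r.
by rewrite rank1N det_principal_mx_add_diag.
Qed.

Lemma det_principal_mx_add_edge_inner A T x y c : x != y -> x \in T -> y \in T ->
  \det (principal_mx (A + c *: (edge_col x y *m (edge_col x y)^T)) T) =
  \det (principal_mx A T) +
  c * \det (principal_mx (merge_mx x y *m A *m (merge_mx x y)^T) (T :\ y)).
Proof.
(* Conjugating by the unimodular [shear_mx x y] turns [e_x - e_y] into [- e_y],
   so the update only touches the diagonal entry of [y]. *)
move=> xy xT yT; set Q := shear_mx x y.
have conj_det N : \det (Q *m N *m Q^T) = \det N.
  by rewrite !det_mulmx det_tr det_shear_mx // mul1r mulr1.
rewrite -conj_det shear_mx_principal_mx // mulmxDr mulmxDl -scalemxAr -scalemxAl conj_rank1.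
rewrite shear_mx_edge_col // rank1N principal_mx_rank1 diag_set_vcol yT.
rewrite det_principal_mx_add_diag // -shear_mx_principal_mx // conj_det.
congr (_ + _ * \det _); apply: principal_mx_congr.
by rewrite diag_set_shear_mx // !inE eqxx.
Qed.

Lemma det_principal_mx_add_edge A S x y r c : x != y -> x \in S -> y \in S -> r \in S ->
  \det (principal_mx (A + c *: (edge_col x y *m (edge_col x y)^T)) (S :\ r)) =
  \det (principal_mx A (S :\ r)) +
  c * \det (principal_mx (merge_mx x y *m A *m (merge_mx x y)^T) (S :\ y :\ idv x y r)).
Proof.
move=> xy xS yS rS; have swap z w : S :\ z :\ w = S :\ w :\ z by rewrite !setDDl setUC.
have merged : principal_mx (merge_mx x y *m A *m (merge_mx x y)^T) (S :\ y :\ x) =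
    principal_mx A (S :\ x :\ y).
  by rewrite principal_mx_merge_out 1?swap // !inE eqxx ?andbF.
have [->|rx] := eqVneq r x; first by rewrite idv_l merged det_principal_mx_add_edge_end.
have [->|ry] := eqVneq r y.
  rewrite idv_r merged -swap -edge_colC_rank1 det_principal_mx_add_edge_end //.
  by rewrite eq_sym.
rewrite idv_id // swap det_principal_mx_add_edge_inner // !inE ?xS ?yS andbT.
  by rewrite eq_sym.
by rewrite eq_sym.
Qed.

End VertexCoordinates.

Arguments vcol {R V}.
Arguments edge_col {R V}.
Arguments diag_set {R V}.
Arguments merge_mx {R V}.

Section MatrixTree.
Variables (R : comPzRingType) (V E : finType).
Implicit Types (en : E -> V * V) (D : {set E}) (S T : {set V}) (e : E) (x y r : V).

Definition laplacian en D : 'M[R]_#|V| :=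
  \sum_(e in D) edge_col (en e).1 (en e).2 *m (edge_col (en e).1 (en e).2)^T.

Lemma tr_laplacian en D : (laplacian en D)^T = laplacian en D.
Proof. by rewrite /laplacian linear_sum; apply: eq_bigr => e _ /=; rewrite trmx_mul trmxK. Qed.

Lemma laplacian_contract en D x y :
  laplacian (contract en x y) D = merge_mx x y *m laplacian en D *m (merge_mx x y)^T.
Proof.
rewrite /laplacian mulmx_sumr mulmx_suml; apply: eq_bigr => e _.
by rewrite -merge_mx_edge_col trmx_mul !mulmxA.
Qed.

Lemma laplacian_setU1 en D e : e \notin D ->
  laplacian en (e |: D) =
  laplacian en D + edge_col (en e).1 (en e).2 *m (edge_col (en e).1 (en e).2)^T.
Proof. by move=> eD; rewrite /laplacian big_setU1 //= addrC. Qed.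

Definition ends_in S en D := [forall e in D, ((en e).1 \in S) && ((en e).2 \in S)].

Lemma ends_in_contract S en D x y : x != y -> x \in S ->
  ends_in S en D -> ends_in (S :\ y) (contract en x y) D.
Proof.
move=> xy xS /forall_inP enD; apply/forall_inP => e /enD /andP[e1 e2].
by rewrite !idv_setD1.
Qed.

Lemma det_principal_mx0 T : \det (principal_mx (0 : 'M[R]_#|V|) T) = (T == set0)%:R.
Proof.
have [->|[u uT]] := set_0Vmem T.
  suff -> : principal_mx (0 : 'M[R]_#|V|) set0 = 1%:M by rewrite det1 eqxx.
  by apply/matrixP => i j; rewrite !mxE !inE.
have /negbTE-> : T != set0 by apply/set0Pn; exists u.
rewrite mulr0n (expand_det_row _ (enum_rank u)); apply: big1 => j _.
rewrite !mxE enum_rankK uT /=; case: ifP => [_|/negbT]; first by rewrite mul0r.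
by case: (enum_rank u =P j) => [<-|_]; rewrite ?mul0r // enum_rankK uT.
Qed.

Theorem matrix_tree S en D r : ends_in S en D -> r \in S ->
  (ntrees_within S en D)%:R = \det (principal_mx (laplacian en D) (S :\ r)) :> R.
Proof.
move: {2}#|D| (erefl #|D|) => k; elim: k S en D r => [|k IH] S en D r cD enD rS.
  move/eqP: cD; rewrite cards_eq0 => /eqP->.
  by rewrite (ntrees_within0 en rS) /laplacian big_set0 det_principal_mx0.
have [e eD] : exists e, e \in D by apply/card_gt0P; rewrite cD.
have eD' : e \notin D :\ e by rewrite !inE eqxx.
have cD' : #|D :\ e| = k by move: cD; rewrite (cardsD1 e D) eD add1n => -[].
have enD' : ends_in S en (D :\ e).
  by apply/forall_inP => f /setD1P[_ fD]; apply: (forall_inP enD).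
have /andP[xS yS] := forall_inP enD e eD.
rewrite -(setD1K eD) laplacian_setU1 //.
have [loop|xy] := eqVneq (en e).1 (en e).2.
  by rewrite ntrees_within_loop // loop edge_col_id mul0mx addr0 (IH _ _ _ r).
have exy : en e = ((en e).1, (en e).2) by case: (en e).
rewrite (ntrees_within_contract eD' exy) // -[_ *m _^T]scale1r.
rewrite det_principal_mx_add_edge // natrD mul1r -(IH _ _ _ r) // -laplacian_contract -IH //.
  exact: ends_in_contract.
exact: idv_setD1.
Qed.

End MatrixTree.

Section LaplacianMinors.
Variables (R : comPzRingType) (V E : finType).
Implicit Types (en : E -> V * V) (S : {set V}) (r s t p q : V) (c d : R).

Lemma det_laplacian_add_edge S en r s t c :
  ends_in S en setT -> r \in S -> s \in S -> t \in S ->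
  \det (principal_mx (laplacian R en setT + c *: (edge_col s t *m (edge_col s t)^T)) (S :\ r)) =
  (ntrees (S, en))%:R + c * (tid (S, en) s t)%:R.
Proof.
move=> enS rS sS tS; rewrite ntrees_within_setT (matrix_tree R enS rS).
have [<-|st] := eqVneq s t.
  by rewrite edge_col_id mul0mx scaler0 addr0 tid_id mulr0n mulr0 addr0.
rewrite det_principal_mx_add_edge // -laplacian_contract (tid_neq _ st) ntrees_within_setT.
by rewrite (matrix_tree R (ends_in_contract st sS enS) (idv_setD1 st sS rS)).
Qed.

Lemma det_laplacian_add_edges S en r s t p q c d :
  ends_in S en setT -> r \in S -> s \in S -> t \in S -> p \in S -> q \in S ->
  \det (principal_mx (laplacian R en setT + c *: (edge_col s t *m (edge_col s t)^T)
                      + d *: (edge_col p q *m (edge_col p q)^T)) (S :\ r)) =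
  (ntrees (S, en))%:R + c * (tid (S, en) s t)%:R
  + d * ((tid (S, en) p q)%:R + c * (tid2 (S, en) p q s t)%:R).
Proof.
move=> enS rS sS tS pS qS; have [<-|pq] := eqVneq p q.
  rewrite edge_col_id mul0mx scaler0 addr0 det_laplacian_add_edge // tid_id /tid2 eqxx.
  by rewrite mulr0 add0r mulr0 addr0.
rewrite det_principal_mx_add_edge // det_laplacian_add_edge // (tid_neq _ pq) tid2_neq // identE.
rewrite mulmxDr mulmxDl -laplacian_contract -scalemxAr -scalemxAl.
rewrite conj_rank1 merge_mx_edge_col det_laplacian_add_edge ?idv_setD1 //.
exact: ends_in_contract.
Qed.

End LaplacianMinors.

Section EffectiveResistance.
Variables (F : fieldType) (V E : finType) (en : E -> V * V) (S : {set V}) (r : V).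
Hypotheses (enS : ends_in S en setT) (rS : r \in S) (tG : (ntrees (S, en))%:R != 0 :> F).

Local Notation G := (S, en).
Local Notation M := (principal_mx (laplacian F en setT) (S :\ r)).
Local Notation w a := (diag_set (S :\ r) *m vcol a).
Local Notation rho a b := (bilin (invmx M) (w a - w b) (w a - w b)).

Lemma det_reduced_laplacian : \det M = (ntrees G)%:R.
Proof. by rewrite ntrees_within_setT (matrix_tree F enS rS). Qed.

Lemma reduced_laplacian_unit : M \in unitmx.
Proof. by rewrite unitmxE unitfE det_reduced_laplacian. Qed.

Lemma tr_inv_reduced_laplacian : (invmx M)^T = invmx M.
Proof. by rewrite trmx_inv tr_principal_mx // tr_laplacian. Qed.

Lemma tid_resistance a b : a \in S -> b \in S -> (tid G a b)%:R = (ntrees G)%:R * rho a b.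
Proof.
move=> aS bS; have := det_laplacian_add_edge (1 : F) enS rS aS bS.
rewrite principal_mx_rank1 mulmxBr det_add_rank1 ?reduced_laplacian_unit // det_reduced_laplacian.
by rewrite !mul1r mulrDr mulr1 => /addrI.
Qed.

Lemma tid2_resistance p q s t : p \in S -> q \in S -> s \in S -> t \in S ->
  (tid2 G p q s t)%:R =
  (ntrees G)%:R * (rho p q * rho s t - bilin (invmx M) (w p - w q) (w s - w t) ^+ 2).
Proof.
move=> pS qS sS tS; have := det_laplacian_add_edges (1 : F) 1 enS rS sS tS pS qS.
rewrite !principal_mx_rank1 !mulmxBr det_add_rank2 ?reduced_laplacian_unit //.
rewrite det_reduced_laplacian (tid_resistance sS tS) (tid_resistance pS qS).
rewrite [bilin _ (w s - w t) (w p - w q)]bilinC ?tr_inv_reduced_laplacian // => h.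
set t0 := (ntrees G)%:R in h *; set t2 := (tid2 G p q s t)%:R in h *.
have -> : t2 = t0 + 1 * (t0 * rho s t) + 1 * (t0 * rho p q + 1 * t2)
               - t0 - t0 * rho s t - t0 * rho p q by ring.
by rewrite -h; ring.
Qed.

Lemma ntrees_tid2 p q s t : p \in S -> q \in S -> s \in S -> t \in S ->
  4%:R * ((ntrees G)%:R * (tid2 G p q s t)%:R) =
  4%:R * ((tid G s t)%:R * (tid G p q)%:R)
  - ((tid G p s)%:R - (tid G q s)%:R - (tid G p t)%:R + (tid G q t)%:R) ^+ 2 :> F.
Proof.
move=> pS qS sS tS; rewrite tid2_resistance // !tid_resistance //.
have polar := bilin_polar (w p) (w q) (w s) (w t) tr_inv_reduced_laplacian.
have -> : rho p t = bilin (invmx M) (w p - w q) (w s - w t) *+ 2 - rho q s + rho p s + rho q t.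
  by rewrite polar; ring.
ring.
Qed.

End EffectiveResistance.

Theorem corollary5p2 (V E : finType) (en : E -> V * V)
    (Hconn : connected_graph ((setT : {set V}), en))
    (ei : E) (s t : V) :
  let G := ((setT : {set V}), en) in
  let p := (en ei).1 in
  let q := (en ei).2 in
  (ntrees G)%:R * (tid2 G p q s t)%:R
  = (tid G s t)%:R * (tid G p q)%:R
    - 4%:R^-1 * ((tid G p s)%:R - (tid G q s)%:R - (tid G p t)%:R + (tid G q t)%:R) ^+ 2
    :> rat.
Proof.
move=> G p q.
have enS : ends_in setT en setT by apply/forall_inP => e _; rewrite !inE.
have tG : (ntrees G)%:R != 0 :> rat by rewrite pnatr_eq0 -lt0n ntrees_gt0.
have four_neq0 : 4%:R != 0 :> rat by [].
apply: (mulfI four_neq0).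
by rewrite (ntrees_tid2 enS (in_setT p) tG) ?in_setT // mulrBr (mulVKf four_neq0).
Qed.
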